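(* For all positive integers $k,t_1,\dots,t_k$ and all real $b,c>1$, $$\prod_{j=1}^k\left(\sum_{p_j=1}^{t_j}\binom{t_j-1}{p_j-1}b^{t_j-p_j}(ct_j)^{cp_j}\right)\le\big(c(t_1+\cdots+t_k)+b\big)^{c(t_1+\cdots+t_k)}.$$ *)

From Stdlib Require Import Reals.
Open Scope R_scope.

Fixpoint sum1 (n : nat) (f : nat -> R) : R :=
  match n with O => 0 | S m => sum1 m f + f (S m) end.

Fixpoint prod1 (n : nat) (f : nat -> R) : R :=
  match n with O => 1 | S m => prod1 m f * f (S m) end.

Fixpoint nsum1 (n : nat) (t : nat -> nat) : nat :=
  match n with O => O | S m => (nsum1 m t + t (S m))%nat end.

(* Writing T = m + 1 and a = (cT)^c, the inner sum is the binomial expansion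
   a (a + b)^m.  Since b^(c-1) >= 1, one has a + b <= (cT + b)^c, so the
   factor for t_j is at most (c t_j + b)^(c t_j) <= (cS + b)^(c t_j), where
   S = t_1 + ... + t_k; multiplying these bounds gives (cS + b)^(cS). *)

From Stdlib Require Import Reals Lra Lia.
Open Scope R_scope.

Lemma Rpower_pos x y : 0 < Rpower x y.
Proof. apply exp_pos. Qed.

Lemma Rpower_plus_le x b c :
  0 < x -> 1 <= b -> 1 <= c -> Rpower x c + b <= Rpower (x + b) c.
Proof.
  intros Hx Hb Hc.
  assert (Hsplit : forall y, 0 < y -> Rpower y c = Rpower y (c - 1) * y).
  { intros y Hy. replace c with ((c - 1) + 1) at 1 by ring.
    now rewrite Rpower_plus, Rpower_1. }
  rewrite (Hsplit x Hx), (Hsplit (x + b)) by lra.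
  assert (Hxle : Rpower x (c - 1) <= Rpower (x + b) (c - 1))
    by (apply Rle_Rpower_l; lra).
  assert (Hble : Rpower b (c - 1) <= Rpower (x + b) (c - 1))
    by (apply Rle_Rpower_l; lra).
  assert (Hb1 : 1 <= Rpower b (c - 1)).
  { rewrite <- (Rpower_O b) at 1 by lra. apply Rle_Rpower; lra. }
  nra.
Qed.

Lemma sum1_succ_sum_f_R0 m f : sum1 (S m) f = sum_f_R0 (fun i => f (S i)) m.
Proof.
  induction m as [|m IH]; [simpl; ring|].
  change (sum1 (S (S m)) f) with (sum1 (S m) f + f (S (S m))).
  now rewrite IH.
Qed.

Lemma sum1_ext n f g : (forall p, f p = g p) -> sum1 n f = sum1 n g.
Proof. intros Hfg. induction n as [|n IH]; simpl; [reflexivity|]. now rewrite IH, Hfg. Qed.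

Lemma sum1_binomial m a b :
  sum1 (S m) (fun p => Binomial.C m (p - 1) * b ^ (S m - p) * a ^ p)
  = a * (a + b) ^ m.
Proof.
  rewrite sum1_succ_sum_f_R0, binomial, scal_sum.
  apply sum_eq; intros i _.
  replace (S i - 1)%nat with i by lia.
  replace (S m - S i)%nat with (m - i)%nat by lia.
  simpl pow; ring.
Qed.

Lemma prod1_nonneg n f : (forall j, (1 <= j <= n)%nat -> 0 <= f j) -> 0 <= prod1 n f.
Proof.
  induction n as [|n IH]; intros Hf; simpl; [lra|].
  apply Rmult_le_pos; [apply IH; intros j Hj |]; apply Hf; lia.
Qed.

Lemma prod1_le n f g :
  (forall j, (1 <= j <= n)%nat -> 0 <= f j <= g j) -> prod1 n f <= prod1 n g.
Proof.
  induction n as [|n IH]; intros Hfg; simpl; [lra|].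
  apply Rmult_le_compat.
  - apply prod1_nonneg; intros j Hj; apply Hfg; lia.
  - apply Hfg; lia.
  - apply IH; intros j Hj; apply Hfg; lia.
  - apply Hfg; lia.
Qed.

Lemma prod1_Rpower x c n t :
  prod1 n (fun j => Rpower x (c * INR (t j))) = Rpower x (c * INR (nsum1 n t)).
Proof.
  induction n as [|n IH].
  - simpl. rewrite Rmult_0_r. unfold Rpower. now rewrite Rmult_0_l, exp_0.
  - simpl. now rewrite IH, plus_INR, Rmult_plus_distr_l, Rpower_plus.
Qed.

Lemma nsum1_ge n t j : (1 <= j <= n)%nat -> (t j <= nsum1 n t)%nat.
Proof.
  induction n as [|n IH]; intros Hj; [lia|].
  simpl. destruct (Nat.eq_dec j (S n)) as [->|Hj_lt]; [lia|].
  specialize (IH ltac:(lia)). lia.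
Qed.

Definition binomial_power_sum (b c : R) (T : nat) : R :=
  sum1 T (fun p => Binomial.C (T - 1) (p - 1) * b ^ (T - p)
                   * Rpower (c * INR T) (c * INR p)).

Lemma binomial_power_sum_closed b c m :
  0 < c ->
  binomial_power_sum b c (S m)
  = Rpower (c * INR (S m)) c * (Rpower (c * INR (S m)) c + b) ^ m.
Proof.
  intros Hc. rewrite <- sum1_binomial. unfold binomial_power_sum.
  replace (S m - 1)%nat with m by lia.
  apply sum1_ext; intros p.
  assert (HcT : 0 < c * INR (S m)) by (apply Rmult_lt_0_compat; [lra | apply lt_0_INR; lia]).
  now rewrite <- (Rpower_pow p (Rpower _ c)), Rpower_mult by apply Rpower_pos.
Qed.

Lemma binomial_power_sum_bound b c T :
  (1 <= T)%nat -> 1 <= b -> 1 <= c ->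
  0 <= binomial_power_sum b c T <= Rpower (c * INR T + b) (c * INR T).
Proof.
  intros HT Hb Hc. destruct T as [|m]; [lia|].
  rewrite binomial_power_sum_closed by lra.
  assert (HcT : 0 < c * INR (S m)) by (apply Rmult_lt_0_compat; [lra | apply lt_0_INR; lia]).
  set (a := Rpower (c * INR (S m)) c).
  set (B := Rpower (c * INR (S m) + b) c).
  assert (Ha : 0 < a) by apply Rpower_pos.
  assert (HaB : a <= B) by (apply Rle_Rpower_l; lra).
  assert (HabB : a + b <= B) by (apply Rpower_plus_le; lra).
  assert (HB : Rpower (c * INR (S m) + b) (c * INR (S m)) = B * B ^ m).
  { unfold B; rewrite <- Rpower_pow by apply Rpower_pos.
    rewrite Rpower_mult, <- Rpower_plus, S_INR. f_equal; ring. }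
  rewrite HB. split.
  - apply Rmult_le_pos; [lra | apply pow_le; lra].
  - apply Rmult_le_compat; [lra | apply pow_le; lra | lra | apply pow_incr; lra].
Qed.

Theorem lemma4p8 (k : nat) (t : nat -> nat) (b c : R) :
  (1 <= k)%nat ->
  (forall j, (1 <= j <= k)%nat -> (1 <= t j)%nat) ->
  1 < b -> 1 < c ->
  prod1 k (fun j =>
    sum1 (t j) (fun p =>
      Binomial.C (t j - 1) (p - 1) * b ^ (t j - p)
      * Rpower (c * INR (t j)) (c * INR p)))
  <= Rpower (c * INR (nsum1 k t) + b) (c * INR (nsum1 k t)).
Proof.
  intros _ Ht Hb Hc.
  rewrite <- prod1_Rpower.
  apply prod1_le; intros j Hj.
  destruct (binomial_power_sum_bound b c (t j)) as [Hpos Hle]; try lra; auto.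
  split; [exact Hpos|].
  apply (Rle_trans _ _ _ Hle), Rle_Rpower_l.
  - apply Rmult_le_pos; [lra | apply pos_INR].
  - assert (HtS : INR (t j) <= INR (nsum1 k t)) by (apply le_INR, nsum1_ge, Hj).
    assert (0 <= INR (t j)) by apply pos_INR.
    nra.
Qed.
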